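(* Let $p\ge 2$, $d\in\{0,\dots,9\}$ and $i\in\{10^{p-2},\dots,10^{p-1}-1\}$ be integers. The sequence $\big(P_{(d,(10i+d+1)10^{n-p+1}-1,p)}\big)_{n\ge p}$ converges, as $n\to\infty$, to $$\frac{\alpha_{(d,p)}10^{p-1}+i+1-10^{p-2}-d\,k_{(d,p,i)}-9l_{(d,p,i)}+m_{(d,p,i)}+n_{(d,p,i)}+10^{p-2}\ln\big(\frac{10^{p-1}+d}{10^{p-1}}\big)}{10i+d+1},$$ where $k_{(d,p,i)}=\sum_{j=10^{p-2}}^{i}\ln\frac{10j+d+1}{10j+d}$, $l_{(d,p,i)}=\sum_{j=10^{p-2}}^{i}j\ln\frac{10j+d+1}{10j+d}$, $m_{(d,p,i)}=\sum_{j=10^{p-2}}^{i-1}\ln\frac{10(j+1)+d}{10j+d+1}$, $n_{(d,p,i)}=\sum_{j=10^{p-2}}^{i-1}j\ln\frac{10(j+1)+d}{10j+d+1}$, and $$\alpha_{(d,p)}=\frac{1}{10}+\frac{n_{(d,p)}+m_{(d,p)}-9l_{(d,p)}-d\,k_{(d,p)}}{9\times10^{p-1}}+\frac{1}{90}\ln\Big(\frac{10^{p-1}+d}{10^{p-1}}\Big)+\frac{1}{9}\ln\Big(\frac{10^{p}}{10^{p}-10+d+1}\Big)$$ with $k_{(d,p)}=k_{(d,p,10^{p-1}-1)}$, $l_{(d,p)}=l_{(d,p,10^{p-1}-1)}$, $m_{(d,p)}=\sum_{j=10^{p-2}}^{10^{p-1}-2}\ln\frac{10(j+1)+d}{10j+d+1}$,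 $n_{(d,p)}=\sum_{j=10^{p-2}}^{10^{p-1}-2}j\ln\frac{10(j+1)+d}{10j+d+1}$.
   Context: For an integer $x\ge 10^{p-1}$, the ''$p$-th digit of $x$'' is the $p$-th digit of its decimal expansion counted from the left. For $d\in\{0,\dots,9\}$ and $m\ge 10^{p-1}$, let $N_d(m)$ be the number of integers $x$ with $10^{p-1}\le x\le m$ whose $p$-th digit is $d$. For $N\ge 10^{p-1}$, $$P_{(d,N,p)}=\frac{1}{N+1-10^{p-1}}\sum_{m=10^{p-1}}^{N}\frac{N_d(m)}{m+1-10^{p-1}},$$ the probability that the $p$-th digit of $x$ is $d$ when $m$ is chosen uniformly in $\{10^{p-1},\dots,N\}$ and then $x$ uniformly in $\{10^{p-1},\dots,m\}$. The number $\alpha_{(d,p)}$ is the limit of $P_{(d,10^n-1,p)}$ as $n\to\infty$. Here $\ln$ is the natural logarithm and empty sums are zero. *)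

From Stdlib Require Import Reals Lra Lia Arith List.
From Coquelicot Require Import Coquelicot.
Open Scope R_scope.

(* number of decimal digits of x (x >= 1); fuel = x suffices *)
Fixpoint ndigits_aux (fuel x : nat) : nat :=
  match fuel with
  | O => O
  | S f => if Nat.ltb x 10 then 1%nat else S (ndigits_aux f (x / 10))
  end.
Definition ndigits (x : nat) : nat := ndigits_aux x x.

(* p-th decimal digit of x counted from the left (meaningful for x >= 10^(p-1)) *)
Definition digit (p x : nat) : nat :=
  ((x / 10 ^ (ndigits x - p)) mod 10)%nat.

Definition Ncount (d p m : nat) : nat :=
  length (filter (fun x => Nat.eqb (digit p x) d)
                 (seq (10 ^ (p - 1)) (m + 1 - 10 ^ (p - 1)))).

(* real sum of f j over lo <= j < hi (empty if hi <= lo) *)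
Definition rsum (lo hi : nat) (f : nat -> R) : R :=
  fold_right Rplus 0 (map f (seq lo (hi - lo))).

Definition Pdig (d N p : nat) : R :=
  / INR (N + 1 - 10 ^ (p - 1)) *
  rsum (10 ^ (p - 1)) (N + 1)
       (fun m => INR (Ncount d p m) / INR (m + 1 - 10 ^ (p - 1))).

Definition kdpi (d p i : nat) : R :=
  rsum (10 ^ (p - 2)) (i + 1)
       (fun j => ln (INR (10 * j + d + 1) / INR (10 * j + d))).
Definition ldpi (d p i : nat) : R :=
  rsum (10 ^ (p - 2)) (i + 1)
       (fun j => INR j * ln (INR (10 * j + d + 1) / INR (10 * j + d))).
(* sums over 10^(p-2) <= j <= i-1 *)
Definition mdpi (d p i : nat) : R :=
  rsum (10 ^ (p - 2)) i
       (fun j => ln (INR (10 * (j + 1) + d) / INR (10 * j + d + 1))).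
Definition ndpi (d p i : nat) : R :=
  rsum (10 ^ (p - 2)) i
       (fun j => INR j * ln (INR (10 * (j + 1) + d) / INR (10 * j + d + 1))).

Definition kdp (d p : nat) : R := kdpi d p (10 ^ (p - 1) - 1).
Definition ldp (d p : nat) : R := ldpi d p (10 ^ (p - 1) - 1).
(* sums over 10^(p-2) <= j <= 10^(p-1)-2 *)
Definition mdp (d p : nat) : R := mdpi d p (10 ^ (p - 1) - 1).
Definition ndp (d p : nat) : R := ndpi d p (10 ^ (p - 1) - 1).

Definition alpha_formula (d p : nat) : R :=
  1 / 10
  + (ndp d p + mdp d p - 9 * ldp d p - INR d * kdp d p) / (9 * 10 ^ (p - 1))
  + 1 / 90 * ln (INR (10 ^ (p - 1) + d) / INR (10 ^ (p - 1)))
  + 1 / 9 * ln (INR (10 ^ p) / INR (10 ^ p - 10 + d + 1)).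

Definition prop5_limit (d p i : nat) : R :=
  (alpha_formula d p * 10 ^ (p - 1) + INR i + 1 - 10 ^ (p - 2)
   - INR d * kdpi d p i - 9 * ldpi d p i + mdpi d p i + ndpi d p i
   + 10 ^ (p - 2) * ln (INR (10 ^ (p - 1) + d) / INR (10 ^ (p - 1))))
  / INR (10 * i + d + 1).

From Stdlib Require Import Reals Lra Lia List ZArith.
From Coquelicot Require Import Coquelicot.
Open Scope R_scope.

(* Write L = 10^(p-1).  For L <= y < 10^p and r < 10^k, every x in the block
   [y 10^k, (y+1) 10^k) has p-th digit y mod 10, so N_d(y 10^k + r) is affine in r.
   The mean of N_d(m) / (m + 1 - L) over such a block is therefore a harmonic sum, and
   converges as k -> oo to
     b(y) = [y mod 10 = d] + (c(y) - [y mod 10 = d] y) ln((y + 1) / y),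
   where c(y) counts the z < y ending in d.  Cutting {L, ..., c 10^K - 1} into the
   decades [L 10^k, L 10^(k+1)) and a last partial decade, a weighted Cesaro argument
   gives P_(d, c 10^K - 1, p) -> (J(10^p) / 9 + J(c)) / c, with J(c) the sum of b(y)
   over L <= y < c.  Between two consecutive y ending in d, b(y) telescopes, which
   gives closed forms of J(10 i + d + 1) and J(10^p), hence the two limits, taking
   c = L and c = 10 i + d + 1. *)

Ltac lia_divmod :=
  zify; rewrite ?Nat2Z.inj_div, ?Nat2Z.inj_mod in *; zify; Z.div_mod_to_equations; lia.

Lemma pow10_pos k : (0 < 10 ^ k)%nat.
Proof. apply Nat.neq_0_lt_0, Nat.pow_nonzero. lia. Qed.

Lemma pow10_pred p : (1 <= p)%nat -> (10 ^ p = 10 * 10 ^ (p - 1))%nat.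
Proof. intros Hp. rewrite <- Nat.pow_succ_r'. f_equal. lia. Qed.

Lemma pow10_pred_pred p : (2 <= p)%nat -> (10 ^ (p - 1) = 10 * 10 ^ (p - 2))%nat.
Proof. intros Hp. rewrite <- Nat.pow_succ_r'. f_equal. lia. Qed.

Lemma pow10_INR k : INR (10 ^ k) = 10 ^ k.
Proof. rewrite pow_INR. now replace (INR 10) with 10 by (simpl; lra). Qed.

Lemma rsum_empty lo hi f : (hi <= lo)%nat -> rsum lo hi f = 0.
Proof. intros H. unfold rsum. now replace (hi - lo)%nat with 0%nat by lia. Qed.

Lemma rsum_succ lo hi f : (lo <= hi)%nat -> rsum lo (S hi) f = rsum lo hi f + f hi.
Proof.
  intros H. unfold rsum. replace (S hi - lo)%nat with (S (hi - lo)) by lia.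
  rewrite seq_S, map_app, fold_right_app.
  replace (lo + (hi - lo))%nat with hi by lia.
  simpl. generalize (map f (seq lo (hi - lo))).
  induction l as [|x l IH]; simpl; [lra|]. rewrite IH. lra.
Qed.

Lemma rsum_ext lo hi f g :
  (forall j, (lo <= j < hi)%nat -> f j = g j) -> rsum lo hi f = rsum lo hi g.
Proof.
  intros H. unfold rsum. f_equal. apply map_ext_in.
  intros j Hj. apply in_seq in Hj. apply H. lia.
Qed.

Lemma rsum_split lo mid hi f : (lo <= mid <= hi)%nat ->
  rsum lo hi f = rsum lo mid f + rsum mid hi f.
Proof.
  intros H. induction hi.
  - rewrite !rsum_empty by lia. lra.
  - destruct (Nat.eq_dec mid (S hi)) as [->|].
    + rewrite (rsum_empty (S hi)) by lia. lra.
    + rewrite !rsum_succ, IHhi by lia. lra.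
Qed.

Lemma rsum_add lo hi f g :
  rsum lo hi (fun j => f j + g j) = rsum lo hi f + rsum lo hi g.
Proof.
  unfold rsum. induction (seq lo (hi - lo)); simpl; lra.
Qed.

Lemma rsum_scal_l lo hi c f : rsum lo hi (fun j => c * f j) = c * rsum lo hi f.
Proof.
  unfold rsum. induction (seq lo (hi - lo)); simpl; lra.
Qed.

Lemma rsum_const lo hi c : rsum lo hi (fun _ => c) = INR (hi - lo) * c.
Proof.
  unfold rsum. rewrite <- (length_seq (hi - lo) lo) at 2.
  induction (seq lo (hi - lo)); simpl length; rewrite ?S_INR; simpl; lra.
Qed.

Lemma rsum_shift a n f : rsum a (a + n) f = rsum 0 n (fun r => f (a + r)%nat).
Proof.
  induction n.
  - rewrite !rsum_empty by lia. reflexivity.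
  - rewrite Nat.add_succ_r, !rsum_succ, IHn by lia. reflexivity.
Qed.

Lemma rsum_blocks a b P f : (a <= b)%nat ->
  rsum (a * P) (b * P) f = rsum a b (fun y => rsum (y * P) ((y + 1) * P) f).
Proof.
  intros H. induction b.
  - rewrite !rsum_empty by nia. reflexivity.
  - destruct (Nat.eq_dec a (S b)) as [->|].
    + rewrite !rsum_empty by lia. reflexivity.
    + rewrite rsum_succ, <- IHb, (rsum_split (a * P) (b * P)) by nia.
      now replace (b + 1)%nat with (S b) by lia.
Qed.

Lemma rsum_geometric_blocks L q K f : (1 <= q)%nat ->
  rsum L (L * q ^ K) f = rsum 0 K (fun k => rsum (L * q ^ k) (L * q ^ S k) f).
Proof.
  intros Hq. induction K.
  - rewrite Nat.pow_0_r, Nat.mul_1_r, !rsum_empty by lia. reflexivity.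
  - assert (q ^ K <> 0)%nat by (apply Nat.pow_nonzero; lia).
    rewrite rsum_succ, <- IHK by lia.
    apply rsum_split. rewrite Nat.pow_succ_r'. nia.
Qed.

Lemma rsum_telescope lo hi g : (lo <= hi)%nat ->
  rsum lo hi (fun y => g (y + 1)%nat - g y) = g hi - g lo.
Proof.
  intros H. induction hi.
  - replace lo with 0%nat by lia. rewrite rsum_empty by lia. ring.
  - destruct (Nat.eq_dec lo (S hi)) as [->|].
    + rewrite rsum_empty by lia. ring.
    + rewrite rsum_succ, IHhi, Nat.add_1_r by lia. ring.
Qed.

Lemma rsum_sum_f_R0 n f : rsum 0 (S n) f = sum_f_R0 f n.
Proof.
  induction n; rewrite rsum_succ by lia.
  - rewrite rsum_empty by lia. simpl. ring.
  - rewrite IHn. reflexivity.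
Qed.

Lemma is_lim_seq_rsum lo hi (g : nat -> nat -> R) (h : nat -> R) :
  (forall y, (lo <= y < hi)%nat -> is_lim_seq (g y) (h y)) ->
  is_lim_seq (fun k => rsum lo hi (fun y => g y k)) (rsum lo hi h).
Proof.
  intros H. unfold rsum.
  assert (Hin : forall y, In y (seq lo (hi - lo)) -> is_lim_seq (g y) (h y))
    by (intros y Hy; apply in_seq in Hy; apply H; lia).
  induction (seq lo (hi - lo)); simpl.
  - apply is_lim_seq_const.
  - apply is_lim_seq_plus'; [apply Hin; now left | apply IHl; intros; apply Hin; now right].
Qed.

Lemma ndigits_aux_eq j fuel x :
  (10 ^ j <= x < 10 ^ S j)%nat -> (j < fuel)%nat -> ndigits_aux fuel x = S j.
Proof.
  revert fuel x. induction j; intros [|fuel] x Hx Hfuel; try lia; cbn [ndigits_aux].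
  - replace (Nat.ltb x 10) with true by (symmetry; apply Nat.ltb_lt; simpl in Hx; lia).
    reflexivity.
  - rewrite !Nat.pow_succ_r' in Hx.
    assert (1 <= 10 ^ j)%nat by apply pow10_pos.
    replace (Nat.ltb x 10) with false by (symmetry; apply Nat.ltb_ge; lia).
    f_equal. apply IHj; [|lia]. split.
    + apply Nat.div_le_lower_bound; lia.
    + apply Nat.Div0.div_lt_upper_bound. rewrite Nat.pow_succ_r'. lia.
Qed.

Lemma ndigits_eq j x : (10 ^ j <= x < 10 ^ S j)%nat -> ndigits x = S j.
Proof.
  intros Hx. apply ndigits_aux_eq; [exact Hx|].
  pose proof (Nat.pow_gt_lin_r 10 j). lia.
Qed.

Lemma digit_shift p k y r : (1 <= p)%nat ->
  (10 ^ (p - 1) <= y < 10 ^ p)%nat -> (r < 10 ^ k)%nat ->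
  digit p (y * 10 ^ k + r) = (y mod 10)%nat.
Proof.
  intros Hp Hy Hr. unfold digit.
  pose proof (pow10_pos k). pose proof (pow10_pred p Hp).
  rewrite (ndigits_eq (p - 1 + k)).
  - replace (S (p - 1 + k) - p)%nat with k by lia.
    replace ((y * 10 ^ k + r) / 10 ^ k)%nat with y; [reflexivity|].
    apply (Nat.div_unique _ _ y r); lia.
  - rewrite Nat.pow_succ_r', Nat.pow_add_r. nia.
Qed.

Lemma Ncount_succ d p m : (1 <= p)%nat -> (10 ^ (p - 1) <= S m)%nat ->
  Ncount d p (S m) = (Ncount d p m + if Nat.eqb (digit p (S m)) d then 1 else 0)%nat.
Proof.
  intros Hp Hm. unfold Ncount.
  replace (S m + 1 - 10 ^ (p - 1))%nat with (S (m + 1 - 10 ^ (p - 1))) by lia.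
  rewrite seq_S, filter_app, length_app.
  replace (10 ^ (p - 1) + (m + 1 - 10 ^ (p - 1)))%nat with (S m) by lia.
  simpl. destruct (Nat.eqb (digit p (S m)) d); simpl; lia.
Qed.

Lemma Ncount_below_start d p : Ncount d p (10 ^ (p - 1) - 1) = 0%nat.
Proof.
  unfold Ncount. pose proof (pow10_pos (p - 1)).
  now replace (10 ^ (p - 1) - 1 + 1 - 10 ^ (p - 1))%nat with 0%nat by lia.
Qed.

(* [last_count d y] is the number of [z < y] whose last digit is [d]. *)
Definition last_count (d y : nat) : nat := ((y + 9 - d) / 10)%nat.
Definition last_is (d y : nat) : nat := if Nat.eqb (y mod 10) d then 1%nat else 0%nat.

Lemma last_count_succ d y : (d <= 9)%nat ->
  last_count d (S y) = (last_count d y + last_is d y)%nat.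
Proof.
  intros Hd. unfold last_count, last_is.
  destruct (Nat.eqb_spec (y mod 10) d); lia_divmod.
Qed.

Lemma last_count_eq d y j : (d <= 9)%nat ->
  (10 * j <= y + 9 - d < 10 * j + 10)%nat -> last_count d y = j.
Proof. intros. unfold last_count. lia_divmod. Qed.

Section Counting.
Variables (p d : nat).
Hypotheses (hp : (2 <= p)%nat) (hd : (d <= 9)%nat).

Lemma Ncount_in_block k y r :
  (10 ^ (p - 1) <= y < 10 ^ p)%nat -> (r < 10 ^ k)%nat ->
  Ncount d p (y * 10 ^ k + r) = (Ncount d p (y * 10 ^ k - 1) + last_is d y * (r + 1))%nat.
Proof.
  intros Hy. pose proof (pow10_pos k). pose proof (pow10_pos (p - 1)).
  assert (Hyk : (10 ^ (p - 1) <= y * 10 ^ k)%nat) by nia.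
  induction r as [|r IH]; intros Hr.
  - replace (y * 10 ^ k + 0)%nat with (S (y * 10 ^ k - 1)) by lia.
    rewrite Ncount_succ by lia.
    replace (S (y * 10 ^ k - 1)) with (y * 10 ^ k + 0)%nat by lia.
    rewrite digit_shift by lia. unfold last_is. destruct (Nat.eqb (y mod 10) d); lia.
  - replace (y * 10 ^ k + S r)%nat with (S (y * 10 ^ k + r)) by lia.
    rewrite Ncount_succ, IH by lia.
    replace (S (y * 10 ^ k + r)) with (y * 10 ^ k + S r)%nat by lia.
    rewrite digit_shift by lia. unfold last_is. destruct (Nat.eqb (y mod 10) d); lia.
Qed.

Lemma Ncount_next_block_start k y : (10 ^ (p - 1) <= y < 10 ^ p)%nat ->
  Ncount d p ((y + 1) * 10 ^ k - 1) = (Ncount d p (y * 10 ^ k - 1) + last_is d y * 10 ^ k)%nat.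
Proof.
  intros Hy. pose proof (pow10_pos k).
  replace ((y + 1) * 10 ^ k - 1)%nat with (y * 10 ^ k + (10 ^ k - 1))%nat by nia.
  rewrite Ncount_in_block by lia. f_equal. f_equal. lia.
Qed.

Lemma last_count_first : last_count d (10 ^ (p - 1)) = (10 ^ (p - 2))%nat.
Proof.
  pose proof (pow10_pred_pred p hp). apply last_count_eq; lia.
Qed.

(* The offset [10^(p-2)] is the number of [z < 10^(p-1)] ending in [d], which
   [last_count] counts and [Ncount] does not. *)
Lemma Ncount_block_start_of_first k :
  (Ncount d p (10 ^ (p - 1) * 10 ^ k - 1) + 10 ^ (p - 2) = 10 ^ k * 10 ^ (p - 2))%nat ->
  forall y, (10 ^ (p - 1) <= y <= 10 ^ p)%nat ->
  (Ncount d p (y * 10 ^ k - 1) + 10 ^ (p - 2) = 10 ^ k * last_count d y)%nat.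
Proof.
  intros Hfirst y Hy. replace y with (10 ^ (p - 1) + (y - 10 ^ (p - 1)))%nat by lia.
  assert (Hy' : (10 ^ (p - 1) + (y - 10 ^ (p - 1)) <= 10 ^ p)%nat) by lia.
  induction (y - 10 ^ (p - 1))%nat as [|n IH].
  - rewrite Nat.add_0_r, last_count_first. exact Hfirst.
  - replace (10 ^ (p - 1) + S n)%nat with (10 ^ (p - 1) + n + 1)%nat in * by lia.
    rewrite Ncount_next_block_start, Nat.add_1_r, last_count_succ by lia.
    specialize (IH ltac:(lia)). nia.
Qed.

Lemma Ncount_block_start k y : (10 ^ (p - 1) <= y <= 10 ^ p)%nat ->
  (Ncount d p (y * 10 ^ k - 1) + 10 ^ (p - 2) = 10 ^ k * last_count d y)%nat.
Proof.
  revert y. apply Ncount_block_start_of_first.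
  pose proof (pow10_pred p ltac:(lia)). pose proof (pow10_pred_pred p hp).
  induction k as [|k IH].
  - rewrite Nat.pow_0_r, Nat.mul_1_r, Ncount_below_start. lia.
  - replace (10 ^ (p - 1) * 10 ^ S k)%nat with (10 ^ p * 10 ^ k)%nat
      by (rewrite Nat.pow_succ_r'; lia).
    rewrite (Ncount_block_start_of_first k IH (10 ^ p)) by lia.
    rewrite (last_count_eq d (10 ^ p) (10 ^ (p - 1))), Nat.pow_succ_r' by lia. lia.
Qed.

Lemma Ncount_block k y r : (10 ^ (p - 1) <= y < 10 ^ p)%nat -> (r < 10 ^ k)%nat ->
  (Ncount d p (y * 10 ^ k + r) + 10 ^ (p - 2)
   = 10 ^ k * last_count d y + last_is d y * (r + 1))%nat.
Proof.
  intros Hy Hr. rewrite Ncount_in_block by lia.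
  pose proof (Ncount_block_start k y ltac:(lia)). lia.
Qed.

End Counting.

Lemma ln_add1_le x : -1 < x -> ln (1 + x) <= x.
Proof.
  intros Hx. rewrite <- (ln_exp x) at 2. apply ln_le; [lra|]. apply exp_ineq1_le.
Qed.

Lemma ln_succ_sub_le_inv t : 0 < t -> ln (t + 1) - ln t <= / t.
Proof.
  intros Ht. rewrite <- ln_div by lra.
  replace ((t + 1) / t) with (1 + / t) by (field; lra).
  apply ln_add1_le. pose proof (Rinv_0_lt_compat t Ht). lra.
Qed.

Lemma inv_le_ln_sub_pred t : 1 < t -> / t <= ln t - ln (t - 1).
Proof.
  intros Ht. rewrite <- ln_div by lra.
  assert (Hinv : / t < 1) by (rewrite <- Rinv_1; apply Rinv_1_lt_contravar; lra).
  replace (t / (t - 1)) with (/ (1 + - / t)) by (field; lra).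
  rewrite ln_Rinv by lra. pose proof (ln_add1_le (- / t)). lra.
Qed.

Definition harmonic (A n : nat) : R := rsum 0 n (fun r => / INR (A + r + 1)).

Lemma harmonic_bounds A n : (1 <= A)%nat ->
  ln (INR (A + n + 1)) - ln (INR (A + 1)) <= harmonic A n <= ln (INR (A + n)) - ln (INR A).
Proof.
  intros HA. unfold harmonic. induction n as [|n IH].
  - rewrite rsum_empty, Nat.add_0_r by lia. lra.
  - rewrite rsum_succ by lia.
    replace (A + S n + 1)%nat with (A + n + 1 + 1)%nat by lia.
    replace (A + S n)%nat with (A + n + 1)%nat by lia.
    assert (1 <= INR (A + n)) by (apply (le_INR 1); lia).
    rewrite !plus_INR in *. simpl INR in *.
    pose proof (ln_succ_sub_le_inv (INR A + INR n + 1)).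
    pose proof (inv_le_ln_sub_pred (INR A + INR n + 1)).
    replace (INR A + INR n + 1 - 1) with (INR A + INR n) in * by lra.
    lra.
Qed.

Lemma continuity_pt_ln x : 0 < x -> continuity_pt ln x.
Proof.
  intros Hx. apply derivable_continuous_pt. exists (/ x). now apply derivable_pt_lim_ln.
Qed.

Lemma is_lim_seq_inv_pow10 : is_lim_seq (fun k => (/ 10) ^ k) 0.
Proof. apply is_lim_seq_geom. rewrite Rabs_pos_eq; lra. Qed.

Lemma is_lim_seq_ln_ratio_pow10 a b u v : 0 < a -> 0 < b ->
  is_lim_seq (fun k => ln ((a * 10 ^ k + u) / (b * 10 ^ k + v))) (ln (a / b)).
Proof.
  intros Ha Hb. apply is_lim_seq_continuous; [apply continuity_pt_ln, Rdiv_lt_0_compat; lra|].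
  apply is_lim_seq_ext with (fun k => (a + u * (/ 10) ^ k) / (b + v * (/ 10) ^ k)).
  - intros k. rewrite pow_inv. assert (Hk : 10 ^ k <> 0) by (apply pow_nonzero; lra).
    replace (a + u * / 10 ^ k) with ((a * 10 ^ k + u) / 10 ^ k) by (field; exact Hk).
    replace (b + v * / 10 ^ k) with ((b * 10 ^ k + v) / 10 ^ k) by (field; exact Hk).
    (* [/ 0 = 0], so no hypothesis [b * 10 ^ k + v <> 0] is needed. *)
    unfold Rdiv. rewrite Rinv_mult, Rinv_inv.
    set (w := / (b * 10 ^ k + v)). field. exact Hk.
  - replace (a / b) with ((a + u * 0) / (b + v * 0)) by (f_equal; ring).
    apply is_lim_seq_div'; [| |lra];
      apply is_lim_seq_plus', is_lim_seq_mult'; try apply is_lim_seq_const;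
      apply is_lim_seq_inv_pow10.
Qed.

Lemma harmonic_block_lim L y : (1 <= L <= y)%nat ->
  is_lim_seq (fun k => harmonic (y * 10 ^ k - L) (10 ^ k)) (ln (INR (y + 1)) - ln (INR y)).
Proof.
  intros Hy.
  rewrite <- ln_div by (apply (lt_INR 0); lia).
  apply is_lim_seq_le_le_loc with
    (u := fun k => ln ((INR (y + 1) * 10 ^ k + (1 - INR L)) / (INR y * 10 ^ k + (1 - INR L))))
    (w := fun k => ln ((INR (y + 1) * 10 ^ k - INR L) / (INR y * 10 ^ k - INR L))).
  - exists 1%nat. intros k Hk.
    assert (H10 : (10 <= 10 ^ k)%nat)
      by (rewrite <- (Nat.pow_1_r 10) at 1; apply Nat.pow_le_mono_r; lia).
    assert (HkL : (10 * L <= y * 10 ^ k)%nat) by nia.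
    destruct (harmonic_bounds (y * 10 ^ k - L) (10 ^ k) ltac:(lia)) as [Hlow Hup].
    rewrite <- !ln_div in Hlow, Hup by (apply (lt_INR 0); lia).
    assert (HA : INR (y * 10 ^ k - L) = INR y * 10 ^ k - INR L)
      by (rewrite minus_INR, mult_INR, pow10_INR by lia; ring).
    rewrite !plus_INR, HA, pow10_INR in Hlow. rewrite !plus_INR, HA, pow10_INR in Hup.
    rewrite plus_INR. simpl INR in *.
    split.
    + replace ((INR y + 1) * 10 ^ k + (1 - INR L)) with (INR y * 10 ^ k - INR L + 10 ^ k + 1)
        by ring.
      replace (INR y * 10 ^ k + (1 - INR L)) with (INR y * 10 ^ k - INR L + 1) by ring.
      exact Hlow.
    + replace ((INR y + 1) * 10 ^ k - INR L) with (INR y * 10 ^ k - INR L + 10 ^ k) by ring.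
      exact Hup.
  - apply is_lim_seq_ln_ratio_pow10; apply (lt_INR 0); lia.
  - apply is_lim_seq_ln_ratio_pow10; apply (lt_INR 0); lia.
Qed.

Lemma is_lim_seq_pow10_average (E : nat -> R) (I : R) : is_lim_seq E I ->
  is_lim_seq (fun K => rsum 0 K (fun k => 10 ^ k * E k) / 10 ^ K) (I / 9).
Proof.
  intros HE.
  set (G := fun n => sum_f_R0 (fun k => 10 ^ k) n).
  assert (HG : forall n, G n = (10 ^ S n - 1) / 9).
  { intros n. pose proof (GP_finite 10 n) as H. unfold G. rewrite Nat.add_1_r in H. lra. }
  assert (Hpow : forall n, 1 <= 10 ^ n) by (intros; apply pow_R1_Rle; lra).
  assert (Hweighted : is_lim_seq (fun n => sum_f_R0 (fun k => 10 ^ k * E k) n / G n) I).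
  { apply is_lim_seq_Reals, Cesaro.
    - now apply is_lim_seq_Reals.
    - intros; apply pow_lt; lra.
    - apply is_lim_seq_p_infty_Reals, is_lim_seq_le_p_loc with (fun n => 10 ^ n).
      + exists 0%nat. intros n _. rewrite HG. simpl. pose proof (Hpow n). lra.
      + apply is_lim_seq_geom_p. lra. }
  apply is_lim_seq_incr_1.
  apply is_lim_seq_ext with
    (fun n => sum_f_R0 (fun k => 10 ^ k * E k) n / G n * ((1 - (/ 10) ^ S n) / 9)).
  - intros n. rewrite rsum_sum_f_R0, HG, pow_inv.
    pose proof (Hpow n). simpl. field. lra.
  - replace (I / 9) with (I * ((1 - 0) / 9)) by field.
    apply is_lim_seq_mult'; [exact Hweighted|].
    apply is_lim_seq_div'; [|apply is_lim_seq_const|lra].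
    apply is_lim_seq_minus'; [apply is_lim_seq_const|].
    apply (is_lim_seq_incr_1 (fun n => (/ 10) ^ n)), is_lim_seq_inv_pow10.
Qed.

Section BlockMeans.
Variables (p d : nat).
Hypotheses (hp : (2 <= p)%nat) (hd : (d <= 9)%nat).

Definition digit_freq (m : nat) : R := INR (Ncount d p m) / INR (m + 1 - 10 ^ (p - 1)).

Definition block_mean (y k : nat) : R :=
  rsum (y * 10 ^ k) ((y + 1) * 10 ^ k) digit_freq / 10 ^ k.

Definition block_limit (y : nat) : R :=
  INR (last_is d y)
  + (INR (last_count d y) - INR (last_is d y) * INR y) * (ln (INR (y + 1)) - ln (INR y)).

Lemma digit_freq_block k y r : (10 ^ (p - 1) <= y < 10 ^ p)%nat -> (r < 10 ^ k)%nat ->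
  digit_freq (y * 10 ^ k + r) = INR (last_is d y)
    + (10 ^ k * INR (last_count d y) - 10 ^ (p - 2)
       - INR (last_is d y) * INR (y * 10 ^ k - 10 ^ (p - 1)))
      * / INR (y * 10 ^ k - 10 ^ (p - 1) + r + 1).
Proof.
  intros Hy Hr. unfold digit_freq.
  pose proof (pow10_pos k).
  assert (Hyk : (10 ^ (p - 1) <= y * 10 ^ k)%nat) by nia.
  pose proof (f_equal INR (Ncount_block p d hp hd k y r Hy Hr)) as HN.
  rewrite !plus_INR, !mult_INR, !pow10_INR, plus_INR in HN.
  replace (y * 10 ^ k + r + 1 - 10 ^ (p - 1))%nat
    with (y * 10 ^ k - 10 ^ (p - 1) + r + 1)%nat by lia.
  assert (0 < INR (y * 10 ^ k - 10 ^ (p - 1) + r + 1)) by (apply (lt_INR 0); lia).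
  rewrite !plus_INR in *. simpl INR in *.
  replace (INR (Ncount d p (y * 10 ^ k + r)))
    with (10 ^ k * INR (last_count d y) + INR (last_is d y) * (INR r + 1) - 10 ^ (p - 2))
    by lra.
  field. lra.
Qed.

Lemma block_mean_eq y k : (10 ^ (p - 1) <= y < 10 ^ p)%nat ->
  block_mean y k = INR (last_is d y)
    + (INR (last_count d y) - 10 ^ (p - 2) * (/ 10) ^ k
       - INR (last_is d y) * (INR y - 10 ^ (p - 1) * (/ 10) ^ k))
      * harmonic (y * 10 ^ k - 10 ^ (p - 1)) (10 ^ k).
Proof.
  intros Hy. unfold block_mean, harmonic.
  replace ((y + 1) * 10 ^ k)%nat with (y * 10 ^ k + 10 ^ k)%nat by lia.
  pose proof (pow10_pos k).
  set (X := 10 ^ k * INR (last_count d y) - 10 ^ (p - 2)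
            - INR (last_is d y) * INR (y * 10 ^ k - 10 ^ (p - 1))).
  rewrite rsum_shift, (rsum_ext 0 (10 ^ k) _
    (fun r => INR (last_is d y) + X * / INR (y * 10 ^ k - 10 ^ (p - 1) + r + 1)))
    by (intros r Hr; apply digit_freq_block; lia).
  rewrite rsum_add, rsum_const, rsum_scal_l, Nat.sub_0_r, pow10_INR.
  unfold X. rewrite minus_INR, mult_INR, !pow10_INR, pow_inv by nia.
  set (Hk := rsum _ _ _). field. apply pow_nonzero. lra.
Qed.

Lemma block_mean_lim y : (10 ^ (p - 1) <= y < 10 ^ p)%nat ->
  is_lim_seq (block_mean y) (block_limit y).
Proof.
  intros Hy.
  eapply is_lim_seq_ext; [intros k; symmetry; exact (block_mean_eq y k Hy)|].
  unfold block_limit.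
  replace (INR (last_count d y) - INR (last_is d y) * INR y) with
    (INR (last_count d y) - 10 ^ (p - 2) * 0 - INR (last_is d y) * (INR y - 10 ^ (p - 1) * 0))
    by ring.
  pose proof is_lim_seq_inv_pow10.
  apply is_lim_seq_plus'; [apply is_lim_seq_const|].
  apply is_lim_seq_mult'.
  - repeat first [apply is_lim_seq_minus' | apply is_lim_seq_mult' | apply is_lim_seq_const
                 | assumption].
  - apply harmonic_block_lim. pose proof (pow10_pos (p - 1)). lia.
Qed.

Definition block_limit_sum (c : nat) : R := rsum (10 ^ (p - 1)) c block_limit.

Lemma rsum_digit_freq_blocks a b k : (a <= b)%nat ->
  rsum (a * 10 ^ k) (b * 10 ^ k) digit_freq = 10 ^ k * rsum a b (fun y => block_mean y k).
Proof.
  intros Hab. rewrite rsum_blocks, <- rsum_scal_l by exact Hab.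
  apply rsum_ext. intros y _. unfold block_mean. field. apply pow_nonzero. lra.
Qed.

Lemma Pdig_blocks c K : (10 ^ (p - 1) <= c <= 10 ^ p)%nat ->
  Pdig d (c * 10 ^ K - 1) p =
  / INR (c * 10 ^ K - 10 ^ (p - 1)) *
  (rsum 0 K (fun k => 10 ^ k * rsum (10 ^ (p - 1)) (10 ^ p) (fun y => block_mean y k))
   + 10 ^ K * rsum (10 ^ (p - 1)) c (fun y => block_mean y K)).
Proof.
  intros Hc. unfold Pdig.
  pose proof (pow10_pos K). pose proof (pow10_pos (p - 1)).
  pose proof (pow10_pred p ltac:(lia)).
  replace (c * 10 ^ K - 1 + 1)%nat with (c * 10 ^ K)%nat by nia.
  f_equal.
  rewrite (rsum_split _ (10 ^ (p - 1) * 10 ^ K)) by nia.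
  rewrite rsum_geometric_blocks, rsum_digit_freq_blocks by lia. f_equal.
  apply rsum_ext. intros k _.
  replace (10 ^ (p - 1) * 10 ^ S k)%nat with (10 ^ p * 10 ^ k)%nat
    by (rewrite Nat.pow_succ_r'; lia).
  apply rsum_digit_freq_blocks. lia.
Qed.

Lemma Pdig_scaled_lim c : (10 ^ (p - 1) <= c <= 10 ^ p)%nat ->
  is_lim_seq (fun K => Pdig d (c * 10 ^ K - 1) p)
    ((block_limit_sum (10 ^ p) / 9 + block_limit_sum c) / INR c).
Proof.
  intros Hc. pose proof (pow10_pos (p - 1)).
  apply is_lim_seq_ext_loc with (fun K =>
    (rsum 0 K (fun k => 10 ^ k * rsum (10 ^ (p - 1)) (10 ^ p) (fun y => block_mean y k)) / 10 ^ K
     + rsum (10 ^ (p - 1)) c (fun y => block_mean y K))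
    / (INR c - 10 ^ (p - 1) * (/ 10) ^ K)).
  { exists 1%nat. intros K HK. rewrite Pdig_blocks by exact Hc.
    assert (H10 : (10 <= 10 ^ K)%nat)
      by (rewrite <- (Nat.pow_1_r 10) at 1; apply Nat.pow_le_mono_r; lia).
    assert (Hlt : INR (10 ^ (p - 1)) < INR c * 10 ^ K)
      by (rewrite <- pow10_INR, <- mult_INR; apply lt_INR; nia).
    rewrite minus_INR, mult_INR, !pow10_INR, pow_inv in * by nia.
    pose proof (pow_lt 10 K ltac:(lra)).
    set (S1 := rsum 0 K _). set (S2 := rsum _ c _).
    field. split; lra. }
  apply is_lim_seq_div'; [apply is_lim_seq_plus'| |].
  - apply is_lim_seq_pow10_average. apply is_lim_seq_rsum. intros; apply block_mean_lim; lia.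
  - apply is_lim_seq_rsum. intros; apply block_mean_lim; lia.
  - replace (Finite (INR c)) with (Finite (INR c - 10 ^ (p - 1) * 0)) by (f_equal; ring).
    apply is_lim_seq_minus', is_lim_seq_mult';
      [apply is_lim_seq_const | apply is_lim_seq_const | apply is_lim_seq_inv_pow10].
  - apply not_0_INR. lia.
Qed.

End BlockMeans.

Lemma ln_div_INR x y : (0 < x)%nat -> (0 < y)%nat -> ln (INR x / INR y) = ln (INR x) - ln (INR y).
Proof. intros. apply ln_div; apply (lt_INR 0); assumption. Qed.

Section ClosedForm.
Variables (p d : nat).
Hypotheses (hp : (2 <= p)%nat) (hd : (d <= 9)%nat).

Lemma block_limit_off j y : (10 * j + d < y < 10 * j + d + 10)%nat ->
  block_limit d y = INR (j + 1) * (ln (INR (y + 1)) - ln (INR y)).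
Proof.
  intros Hy. unfold block_limit, last_is.
  destruct (Nat.eqb_spec (y mod 10) d) as [Hmod|]; [exfalso; lia_divmod|].
  rewrite (last_count_eq d y (j + 1)) by lia. change (INR 0) with 0. ring.
Qed.

Lemma block_limit_peak j : block_limit d (10 * j + d) =
  1 + (INR j - INR (10 * j + d)) * (ln (INR (10 * j + d + 1)) - ln (INR (10 * j + d))).
Proof.
  unfold block_limit, last_is.
  replace ((10 * j + d) mod 10)%nat with d by lia_divmod. rewrite Nat.eqb_refl.
  rewrite (last_count_eq d _ j) by lia. change (INR 1) with 1. ring.
Qed.

Lemma rsum_block_limit_off j lo hi :
  (10 * j + d < lo)%nat -> (lo <= hi <= 10 * j + d + 10)%nat ->
  rsum lo hi (block_limit d) = INR (j + 1) * (ln (INR hi) - ln (INR lo)).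
Proof.
  intros Hlo Hhi. rewrite (rsum_ext _ _ _ (fun y => INR (j + 1) * (ln (INR (y + 1)) - ln (INR y))))
    by (intros y Hy; apply block_limit_off; lia).
  rewrite rsum_scal_l, (rsum_telescope lo hi (fun y => ln (INR y))) by lia. reflexivity.
Qed.

Definition block_limit_sum_closed (i : nat) : R :=
  INR i + 1 - 10 ^ (p - 2) - INR d * kdpi d p i - 9 * ldpi d p i + mdpi d p i + ndpi d p i
  + 10 ^ (p - 2) * ln (INR (10 ^ (p - 1) + d) / INR (10 ^ (p - 1))).

Lemma block_limit_sum_first :
  block_limit_sum p d (10 * 10 ^ (p - 2) + d + 1) = block_limit_sum_closed (10 ^ (p - 2)).
Proof.
  pose proof (pow10_pos (p - 2)).
  pose proof (pow10_pred_pred p hp) as HL.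
  unfold block_limit_sum, block_limit_sum_closed, kdpi, ldpi, mdpi, ndpi.
  rewrite <- HL, Nat.add_1_r, rsum_succ by lia.
  rewrite (rsum_block_limit_off (10 ^ (p - 2) - 1)) by lia.
  replace (10 ^ (p - 2) - 1 + 1)%nat with (10 ^ (p - 2))%nat by lia.
  rewrite HL, block_limit_peak, <- HL.
  replace (10 ^ (p - 2) + 1)%nat with (S (10 ^ (p - 2))) by lia.
  rewrite !rsum_succ, !rsum_empty by lia.
  rewrite HL, !ln_div_INR by lia.
  set (a := (10 ^ (p - 2))%nat).
  set (l1 := ln (INR (10 * a + d + 1))). set (l2 := ln (INR (10 * a + d))).
  set (l3 := ln (INR (10 * a))).
  unfold a. rewrite !plus_INR, !mult_INR, pow10_INR. replace (INR 10) with 10 by (simpl; ring). ring.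
Qed.

Lemma block_limit_sum_succ i : (10 ^ (p - 2) <= i)%nat ->
  block_limit_sum p d (10 * S i + d + 1) = block_limit_sum p d (10 * i + d + 1)
    + INR (i + 1) * (ln (INR (10 * S i + d)) - ln (INR (10 * i + d + 1)))
    + block_limit d (10 * S i + d).
Proof.
  intros Hi. pose proof (pow10_pred_pred p hp) as HL.
  unfold block_limit_sum.
  replace (10 * S i + d + 1)%nat with (S (10 * S i + d)) by lia.
  rewrite rsum_succ, (rsum_split _ (10 * i + d + 1)) by lia.
  rewrite (rsum_block_limit_off i (10 * i + d + 1)) by lia. reflexivity.
Qed.

Lemma block_limit_sum_closed_succ i : (10 ^ (p - 2) <= i)%nat ->
  block_limit_sum_closed (S i) = block_limit_sum_closed i
    + INR (i + 1) * (ln (INR (10 * S i + d)) - ln (INR (10 * i + d + 1)))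
    + block_limit d (10 * S i + d).
Proof.
  intros Hi. rewrite block_limit_peak.
  unfold block_limit_sum_closed, kdpi, ldpi, mdpi, ndpi.
  replace (S i + 1)%nat with (S (i + 1)) by lia.
  rewrite !(rsum_succ _ (i + 1)), !(rsum_succ _ i) by lia.
  replace (i + 1)%nat with (S i) by lia.
  rewrite !ln_div_INR by lia.
  set (l1 := ln (INR (10 * S i + d + 1))). set (l2 := ln (INR (10 * S i + d))).
  set (l3 := ln (INR (10 * i + d + 1))).
  rewrite !plus_INR, !mult_INR, S_INR. replace (INR 10) with 10 by (simpl; ring). ring.
Qed.

Lemma block_limit_sum_eq_closed i : (10 ^ (p - 2) <= i)%nat ->
  block_limit_sum p d (10 * i + d + 1) = block_limit_sum_closed i.
Proof.
  intros Hi. replace i with (10 ^ (p - 2) + (i - 10 ^ (p - 2)))%nat by lia.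
  induction (i - 10 ^ (p - 2))%nat as [|t IH].
  - rewrite Nat.add_0_r. apply block_limit_sum_first.
  - replace (10 ^ (p - 2) + S t)%nat with (S (10 ^ (p - 2) + t)) by lia.
    rewrite block_limit_sum_succ, block_limit_sum_closed_succ, IH by lia. reflexivity.
Qed.

Lemma block_limit_sum_top : block_limit_sum p d (10 ^ p) =
  block_limit_sum_closed (10 ^ (p - 1) - 1)
  + INR (10 ^ (p - 1)) * (ln (INR (10 ^ p)) - ln (INR (10 ^ p - 9 + d))).
Proof.
  pose proof (pow10_pos (p - 2)). pose proof (pow10_pred p ltac:(lia)).
  pose proof (pow10_pred_pred p hp) as HL.
  rewrite <- block_limit_sum_eq_closed by lia. unfold block_limit_sum.
  replace (10 * (10 ^ (p - 1) - 1) + d + 1)%nat with (10 ^ p - 9 + d)%nat by lia.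
  rewrite (rsum_split _ (10 ^ p - 9 + d) (10 ^ p)) by lia.
  rewrite (rsum_block_limit_off (10 ^ (p - 1) - 1) (10 ^ p - 9 + d)) by lia.
  now replace (10 ^ (p - 1) - 1 + 1)%nat with (10 ^ (p - 1))%nat by lia.
Qed.

Lemma alpha_formula_eq : alpha_formula d p =
  (block_limit_sum p d (10 ^ p) / 9 + block_limit_sum p d (10 ^ (p - 1))) / INR (10 ^ (p - 1)).
Proof.
  pose proof (pow10_pos (p - 2)). pose proof (pow10_pred p ltac:(lia)).
  pose proof (pow10_pred_pred p hp) as HL.
  unfold block_limit_sum at 2. rewrite rsum_empty by lia.
  rewrite block_limit_sum_top.
  unfold alpha_formula, block_limit_sum_closed, kdp, ldp, mdp, ndp.
  replace (10 ^ p - 10 + d + 1)%nat with (10 ^ p - 9 + d)%nat by lia.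
  rewrite (ln_div_INR (10 ^ p)) by lia.
  set (A := ln (INR (10 ^ (p - 1) + d) / INR (10 ^ (p - 1)))).
  set (B := ln (INR (10 ^ p))). set (C := ln (INR (10 ^ p - 9 + d))).
  rewrite minus_INR, !pow10_INR by lia.
  replace (10 ^ (p - 1)) with (10 * 10 ^ (p - 2))
    by (rewrite <- (pow10_INR (p - 1)), HL, mult_INR, pow10_INR; simpl; ring).
  pose proof (pow_lt 10 (p - 2) ltac:(lra)). change (INR 1) with 1. field. lra.
Qed.

Lemma prop5_limit_eq i : (10 ^ (p - 2) <= i)%nat ->
  prop5_limit d p i =
  (block_limit_sum p d (10 ^ p) / 9 + block_limit_sum p d (10 * i + d + 1))
  / INR (10 * i + d + 1).
Proof.
  intros Hi. pose proof (pow_lt 10 (p - 1) ltac:(lra)).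
  assert (Halpha : alpha_formula d p * 10 ^ (p - 1) = block_limit_sum p d (10 ^ p) / 9).
  { rewrite alpha_formula_eq. unfold block_limit_sum at 2.
    rewrite rsum_empty, pow10_INR by lia. field. lra. }
  rewrite block_limit_sum_eq_closed by exact Hi.
  unfold prop5_limit, block_limit_sum_closed. rewrite Halpha. f_equal. ring.
Qed.

End ClosedForm.

Theorem proposition5 (p d i : nat)
  (hp : (2 <= p)%nat) (hd : (d <= 9)%nat)
  (hi1 : (10 ^ (p - 2) <= i)%nat) (hi2 : (i <= 10 ^ (p - 1) - 1)%nat) :
  is_lim_seq (fun n => Pdig d (10 ^ n - 1) p) (alpha_formula d p) /\
  is_lim_seq (fun n => Pdig d ((10 * i + d + 1) * 10 ^ (n - p + 1) - 1) p)
             (prop5_limit d p i).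
Proof.
  pose proof (pow10_pos (p - 2)). pose proof (pow10_pred_pred p hp).
  pose proof (pow10_pred p ltac:(lia)).
  split.
  - apply (is_lim_seq_incr_n _ (p - 1)).
    apply is_lim_seq_ext with (fun n => Pdig d (10 ^ (p - 1) * 10 ^ n - 1) p).
    { intros n. now rewrite Nat.pow_add_r, Nat.mul_comm. }
    rewrite alpha_formula_eq by assumption. apply Pdig_scaled_lim; lia.
  - apply (is_lim_seq_incr_n _ p).
    apply is_lim_seq_ext with (fun n => Pdig d ((10 * i + d + 1) * 10 ^ S n - 1) p).
    { intros n. now replace (n + p - p + 1)%nat with (S n) by lia. }
    apply (is_lim_seq_incr_1 (fun n => Pdig d ((10 * i + d + 1) * 10 ^ n - 1) p)).
    rewrite prop5_limit_eq by assumption. apply Pdig_scaled_lim; lia.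
Qed.
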